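(* Let $u\ge1$ be an integer, $H$ a graph with $\mathrm{dom}(H)\ge u$, and $\Delta\ge\omega\ge\omega_0(H^{\downarrow u})+u$ with $\omega-u$ dividing $\Delta$. Let $L=\mathrm{T}_\omega(\frac{\omega\Delta}{\omega-u})$, and for $p\ge1$ write $p=q\,k^u(L)+r$ with integers $q\ge 0$, $0\le r<k^u(L)$. Then \[ \lim_{p\to\infty}\frac{\mathrm{ex}_u(p,H,\{K_u\vee I_{\Delta+1},K_{\omega+1}\})}{\mathcal{N}(H,qL\cup rK_u)}=1,\qquad \lim_{p\to\infty}\frac{\mathrm{ex}_u(p,H,\{K_u\vee I_{\Delta+1},K_{\omega+1}\})}{\frac{\mathcal{N}(H,L)}{k^u(L)}p}=1, \] and whenever $k^u(L)$ divides $p$, $\mathrm{ex}_u(p,H,\{K_u\vee I_{\Delta+1},K_{\omega+1}\})=\mathcal{N}\big(H,\frac{p}{k^u(L)}L\big)$.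
   Context: All graphs are finite and simple. $\mathcal{N}(H,G)$ is the number of (not necessarily induced) subgraphs of $G$ isomorphic to $H$; $k^u(G)=\mathcal{N}(K_u,G)$. $\mathrm{T}_r(n)$ is the Turán graph (complete $r$-partite on $n$ vertices with part sizes $\lfloor n/r\rfloor$ or $\lceil n/r\rceil$). $K_u\vee I_{\Delta+1}$ is the complete split graph: a $u$-clique, an independent set of $\Delta+1$ vertices, and all edges between them. $qL\cup rK_u$ is the disjoint union of $q$ copies of $L$ and $r$ copies of $K_u$; $aL$ is the disjoint union of $a$ copies of $L$. A dominating vertex of $H$ is one adjacent to all other vertices; $\mathrm{dom}(H)$ is their number; $H^{\downarrow u}$ is $H$ with $u$ dominating vertices deleted. For a graph $J$, $\omega_0(J)$ is the least positive integer such that for every integer $r\ge\omega_0(J)$ and every $n\ge1$, every $n$-vertex $K_{r+1}$-free graph $G$ satisfies $\mathcal{N}(J,G)\le\mathcal{N}(J,\mathrm{T}_r(n))$ (it exists by a theorem of Morrison et al.). $\mathrm{ex}_u(p,H,\mathcal{F})\in[0,\infty]$ is the supremum of $\mathcal{N}(H,G)$ over graphs $G$ with $k^u(G)=p$ having no subgraph isomorphic to a member of $\mathcal{F}$. *)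

From HB Require Import structures.
From mathcomp Require Import all_boot all_order all_algebra.
From mathcomp Require Import all_classical all_reals all_analysis.

Set Implicit Arguments.
Unset Strict Implicit.
Unset Printing Implicit Defensive.

Import Order.TTheory GRing.Theory Num.Theory.

Record graph := Graph {
  gn : nat;
  gadj : 'I_gn -> 'I_gn -> bool;
  gadj_sym : forall x y, gadj x y = gadj y x;
  gadj_irr : forall x, gadj x x = false }.

(* (W, F) is a (not necessarily induced) subgraph of G with vertex set W and
   edge set F (F given as a set of ordered pairs), isomorphic to H. *)
Definition is_copy (H G : graph) (W : {set 'I_(gn G)})
  (F : {set 'I_(gn G) * 'I_(gn G)}) : bool :=
  [&& F \subset [set e | gadj e.1 e.2], F \subset finset.setX W W &
   [exists f : {ffun 'I_(gn H) -> 'I_(gn G)},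
     [&& injectiveb f, f @: setT == W &
      [forall i, forall j, gadj i j == ((f i, f j) \in F)]]]].

Definition Ncopies (H G : graph) : nat :=
  #|[set WF : {set 'I_(gn G)} * {set 'I_(gn G) * 'I_(gn G)} |
       @is_copy H G WF.1 WF.2]|.

Definition K (n : nat) : graph.
Proof.
refine (@Graph n (fun i j => i != j) _ _).
- by move=> x y; rewrite eq_sym.
- by move=> x; rewrite eqxx.
Defined.

Definition kcl (u : nat) (G : graph) : nat := Ncopies (K u) G.

(* Turan graph T_r(n): vertex i lies in part (i mod r); parts have sizes
   floor(n/r) or ceil(n/r). *)
Definition T (r n : nat) : graph.
Proof.
refine (@Graph n (fun i j => (i %% r != j %% r)%N) _ _).
- by move=> x y; rewrite eq_sym.
- by move=> x; rewrite eqxx.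
Defined.

(* complete split graph K_u \/ I_m : vertices < u form the clique,
   the other m vertices the independent set. *)
Definition KI (u m : nat) : graph.
Proof.
refine (@Graph (u + m) (fun i j => (i != j) && ((i < u)%N || (j < u)%N)) _ _).
- by move=> x y; rewrite eq_sym orbC.
- by move=> x; rewrite eqxx.
Defined.

Definition gunion_adj (G1 G2 : graph) (x y : 'I_(gn G1 + gn G2)) : bool :=
  match fintype.split x, fintype.split y with
  | inl a, inl b => gadj a b
  | inr a, inr b => gadj a b
  | _, _ => false
  end.

Definition gunion (G1 G2 : graph) : graph.
Proof.
refine (@Graph (gn G1 + gn G2) (@gunion_adj G1 G2) _ _).
- move=> x y; rewrite /gunion_adj.
  by case: (fintype.split x) => a; case: (fintype.split y) => b //; rewrite gadj_sym.
- by move=> x; rewrite /gunion_adj; case: (fintype.split x) => a; rewrite gadj_irr.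
Defined.

Fixpoint copies (a : nat) (L : graph) : graph :=
  match a with
  | 0 => K 0
  | a'.+1 => gunion (copies a' L) L
  end.

Definition dominating (G : graph) (v : 'I_(gn G)) : bool :=
  [forall w, (w != v) ==> gadj v w].
Arguments dominating : clear implicits.

Definition dom (G : graph) : nat := #|[set v | dominating G v]|.

Definition induced (G : graph) (S : {set 'I_(gn G)}) : graph.
Proof.
refine (@Graph #|S| (fun i j => gadj (enum_val i) (enum_val j)) _ _).
- by move=> x y; rewrite gadj_sym.
- by move=> x; rewrite gadj_irr.
Defined.

(* H^{down u}: delete u dominating vertices (the u smallest-indexed ones;
   the result does not depend on the choice up to isomorphism). *)
Definition Hdown (G : graph) (u : nat) : graph :=
  @induced G (~: [set v | dominating G v &&
                 (#|[set w | dominating G w & (val w < val v)%N]| < u)%N]).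

Definition free (F G : graph) : Prop := Ncopies F G = 0.

(* The property defining omega_0(J): for every r >= m and every n >= 1,
   every n-vertex K_{r+1}-free G satisfies N(J,G) <= N(J,T_r(n)). *)
Definition turan_prop (J : graph) (m : nat) : Prop :=
  forall r, (m <= r)%N -> forall G : graph, (1 <= gn G)%N ->
    free (K r.+1) G -> (Ncopies J G <= Ncopies J (T r (gn G)))%N.

Definition is_omega0 (J : graph) (w : nat) : Prop :=
  [/\ (0 < w)%N, turan_prop J w &
      forall w', (0 < w')%N -> turan_prop J w' -> (w <= w')%N].

Fixpoint inlist (F : graph) (Fs : seq graph) : Prop :=
  match Fs with [::] => False | F' :: Fs' => F = F' \/ inlist F Fs' end.

Definition ex_u (R : realType) (u p : nat) (H : graph) (Fs : seq graph)
  : \bar R :=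
  ereal_sup ((fun G => ((Ncopies H G)%:R : R)%:E) @`
     [set G : graph | kcl u G = p /\ forall F, inlist F Fs -> free F G]).

From Pilot Require Import Defs.
From HB Require Import structures.
From mathcomp Require Import all_boot all_order all_algebra.
From mathcomp Require Import all_classical all_reals all_analysis.
From mathcomp Require Import zify ring lra.

Import Order.TTheory GRing.Theory Num.Theory.

Set Implicit Arguments.
Unset Strict Implicit.
Unset Printing Implicit Defensive.

(* Count embeddings (injective edge-preserving maps) instead of copies; the two differ by the
   factor aut(J).  Since H has u dominating vertices, an embedding of H into G is a u-clique g
   of G together with an embedding of H^(down u) into the common neighbourhood N(g) of g.  If G
   is (K_u v I_(Delta+1))-free and K_(omega+1)-free, then N(g) has at most Delta vertices and
   is K_(omega-u+1)-free, so by the choice of omega_0 it carries at most as many embeddings of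
   H^(down u) as T_(omega-u)(Delta).  In L every N(g) contains T_(omega-u)(Delta), hence
   N(H,G) / k^u(G) <= N(H,L) / k^u(L) for every admissible G.  The admissible graph
   qL + rK_u has exactly p copies of K_u and at least q N(H,L) copies of H, which gives the
   exact value when k^u(L) divides p and both limits, with error O(1/p). *)

(* The analysis library shadows these names. *)
Local Notation inE := finset.inE.
Local Notation set0 := finset.set0.
Local Notation in_set0 := finset.in_set0.
Local Notation subsetT := finset.subsetT.
Local Notation subsetP := fintype.subsetP.
Local Notation in_setX := finset.in_setX.
Local Notation free := Defs.free.
Local Notation induced := Defs.induced.

(** * Embeddings and copies *)

Definition embs (J G : graph) : {set {ffun 'I_(gn J) -> 'I_(gn G)}} :=
  [set f : {ffun _ -> _} |
     injectiveb f && [forall i, forall j, gadj i j ==> gadj (f i) (f j)]].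

Definition nemb (J G : graph) : nat := #|embs J G|.

Lemma embsP J G (f : {ffun 'I_(gn J) -> 'I_(gn G)}) :
  reflect (injective f /\ forall i j, gadj i j -> gadj (f i) (f j)) (f \in embs J G).
Proof.
rewrite inE; apply: (iffP andP) => [[/injectiveP f_inj /forallP f_adj]|[f_inj f_adj]].
  by split=> // i j ij; move/forallP/(_ j): (f_adj i); rewrite ij.
split; first exact/injectiveP.
by apply/forallP => i; apply/forallP => j; apply/implyP; apply: f_adj.
Qed.

Lemma nemb_self_gt0 J : (0 < nemb J J)%N.
Proof.
rewrite /nemb card_gt0; apply/set0Pn; exists [ffun i => i].
by apply/embsP; split=> i j; rewrite !ffunE.
Qed.

Definition postcomp (A B C : finType) (phi : B -> C) (f : {ffun A -> B}) : {ffun A -> C} :=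
  [ffun i => phi (f i)].

Lemma postcomp_inj (A B C : finType) (phi : B -> C) :
  injective phi -> injective (@postcomp A B C phi).
Proof.
by move=> phi_inj f g /ffunP E; apply/ffunP => i; move: (E i); rewrite !ffunE => /phi_inj.
Qed.

Lemma postcomp_emb J G1 G2 (phi : 'I_(gn G1) -> 'I_(gn G2)) f :
  injective phi -> (forall x y, gadj x y -> gadj (phi x) (phi y)) ->
  f \in embs J G1 -> postcomp phi f \in embs J G2.
Proof.
move=> phi_inj phi_adj /embsP[f_inj f_adj]; apply/embsP; split.
  by move=> x y; rewrite !ffunE => /phi_inj /f_inj.
by move=> x y /f_adj /phi_adj; rewrite !ffunE.
Qed.

Lemma nemb_le J G1 G2 (phi : 'I_(gn G1) -> 'I_(gn G2)) :
  injective phi -> (forall x y, gadj x y -> gadj (phi x) (phi y)) ->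
  (nemb J G1 <= nemb J G2)%N.
Proof.
move=> phi_inj phi_adj; rewrite /nemb -(card_imset _ (postcomp_inj phi_inj)).
apply: subset_leq_card; apply/subsetP => _ /imsetP[f f_emb ->].
exact: postcomp_emb.
Qed.

Definition edges J : {set 'I_(gn J) * 'I_(gn J)} := [set ij | gadj ij.1 ij.2].

(* As in [is_copy], [setT] is the full classical set, used as a predicate. *)
Definition copy_of J G (f : {ffun 'I_(gn J) -> 'I_(gn G)}) :
  {set 'I_(gn G)} * {set 'I_(gn G) * 'I_(gn G)} :=
  (f @: setT, [set (f ij.1, f ij.2) | ij in edges J]).

Lemma copy_of_is_copy J G f :
  f \in embs J G -> @is_copy J G (copy_of f).1 (copy_of f).2.
Proof.
move=> /embsP[f_inj f_adj]; rewrite /copy_of /=; apply/and3P; split.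
- apply/subsetP => _ /imsetP[ij ij_edge ->]; rewrite inE /=.
  by apply: f_adj; rewrite inE in ij_edge.
- by apply/subsetP => _ /imsetP[ij _ ->]; rewrite inE /= !imset_f ?in_setT.
- apply/existsP; exists f; apply/and3P; split; [exact/injectiveP | by apply/eqP |].
  apply/forallP => i; apply/forallP => j; apply/eqP; apply/idP/idP => [ij|/imsetP[[a b]]].
    by apply/imsetP; exists (i, j); rewrite ?inE.
  by rewrite inE /= => ab [/f_inj -> /f_inj ->].
Qed.

Lemma is_copy_copy_of J G W F : @is_copy J G W F ->
  exists2 f, f \in embs J G & copy_of f = (W, F).
Proof.
case/and3P => /subsetP F_edges /subsetP F_W.
case/existsP => f /and3P[/injectiveP f_inj /eqP f_W /forallP f_F].
have adjF i j : gadj i j = ((f i, f j) \in F) by move/forallP/(_ j)/eqP: (f_F i).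
exists f.
  by apply/embsP; split=> // i j; rewrite adjF => /F_edges; rewrite inE.
rewrite /copy_of f_W; congr pair; apply/setP => e; apply/imsetP/idP.
  by move=> [ij]; rewrite inE adjF => ? ->.
move=> eF; have := F_W _ eF; rewrite inE => /andP[].
rewrite -f_W => /imsetP[a _ Ea] /imsetP[b _ Eb].
exists (a, b); last by case: e eF Ea Eb => ? ? /= _ -> ->.
by rewrite inE /= adjF -Ea -Eb; case: e eF {Ea Eb}.
Qed.

Lemma emb_self_surj J s : s \in embs J J ->
  (forall y, exists x, y = s x) /\ [set (s ij.1, s ij.2) | ij in edges J] = edges J.
Proof.
move=> /embsP[s_inj s_adj]; split.
  move=> y; have : y \in s @: [set: 'I_(gn J)].
    suff -> : s @: [set: 'I_(gn J)] = [set: 'I_(gn J)] by rewrite finset.in_setT.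
    by apply/eqP; rewrite eqEcard subsetT (card_imset _ s_inj) leqnn.
  by case/imsetP => x _ ->; exists x.
apply/eqP; rewrite eqEcard card_imset; last by move=> [a b] [c d] /= [/s_inj -> /s_inj ->].
rewrite leqnn andbT; apply/subsetP => _ /imsetP[ij ij_edge ->].
by rewrite inE /=; apply: s_adj; rewrite inE in ij_edge.
Qed.

Lemma copy_of_comp J G (f : {ffun 'I_(gn J) -> 'I_(gn G)}) s :
  s \in embs J J -> copy_of (postcomp f s) = copy_of f.
Proof.
move=> /emb_self_surj[s_onto s_edges]; rewrite /copy_of; congr pair.
  apply/setP => y; apply/imsetP/imsetP => [[x _ ->]|[x _ ->]].
    by exists (s x); rewrite ?in_setT ?ffunE.
  by have [z ->] := s_onto x; exists z; rewrite ?in_setT ?ffunE.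
by rewrite -[in RHS]s_edges -imset_comp; apply: eq_imset => ij /=; rewrite !ffunE.
Qed.

Lemma card_copy_fiber J G c : c \in [set WF | @is_copy J G WF.1 WF.2] ->
  #|[set f in embs J G | copy_of f == c]| = nemb J J.
Proof.
case: c => W F; rewrite inE => /is_copy_copy_of[f0 f0_emb f0_copy].
have f0_inj : injective f0 by case/embsP: f0_emb.
suff -> : [set f in embs J G | copy_of f == (W, F)] = postcomp f0 @: embs J J.
  by rewrite card_imset //; apply: postcomp_inj.
apply/setP => f; rewrite inE; apply/andP/imsetP => [[f_emb /eqP f_copy]|[s s_emb ->]].
  have /embsP[f_inj f_adj] := f_emb.
  have in_f0 i : exists j, f i = f0 j.
    have : f i \in (copy_of f).1 by rewrite /= imset_f ?in_setT.
    by rewrite f_copy -f0_copy => /imsetP[j _ ->]; exists j.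
  have [s f_s] := fin_all_exists in_f0.
  exists [ffun i => s i]; last by apply/ffunP => i; rewrite !ffunE.
  apply/embsP; split=> [i j|i j ij]; rewrite !ffunE.
    by move=> E; apply: f_inj; rewrite !f_s E.
  have : (f i, f j) \in (copy_of f).2 by apply/imsetP; exists (i, j); rewrite ?inE.
  rewrite f_copy -f0_copy => /imsetP[[a b]]; rewrite inE /= !f_s => ab.
  by case=> /f0_inj -> /f0_inj ->.
split; last by rewrite copy_of_comp // f0_copy.
case/embsP: f0_emb => _ f0_adj; case/embsP: s_emb => s_inj s_adj.
by apply/embsP; split=> x y; rewrite !ffunE; [move=> /f0_inj /s_inj | move=> /s_adj /f0_adj].
Qed.

Lemma ncopies_nemb J G : (Ncopies J G * nemb J J)%N = nemb J G.
Proof.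
rewrite [RHS]/nemb -sum1_card.
rewrite (partition_big (@copy_of J G)
  (fun WF => WF \in [set WF | @is_copy J G WF.1 WF.2])); last first.
  by move=> f f_emb; rewrite inE; apply: copy_of_is_copy.
rewrite /Ncopies -sum1_card big_distrl /=; apply: eq_bigr => c c_copy.
by rewrite mul1n -(card_copy_fiber c_copy) -sum1_card; apply: eq_bigl => f; rewrite inE.
Qed.

Lemma freeP J G : free J G <-> (forall f, f \notin embs J G).
Proof.
rewrite /free; split=> [J_free f|no_emb].
  apply/negP => f_emb; move: (ncopies_nemb J G); rewrite J_free mul0n.
  by move/esym/eqP; rewrite cards_eq0 => /eqP/setP/(_ f); rewrite in_set0 f_emb.
apply/eqP; rewrite -(eqn_pmul2r (nemb_self_gt0 J)) mul0n ncopies_nemb cards_eq0.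
by apply/eqP/setP => f; rewrite in_set0 (negbTE (no_emb f)).
Qed.

Lemma ncopies_self J : Ncopies J J = 1%N.
Proof. by apply/eqP; rewrite -(eqn_pmul2r (nemb_self_gt0 J)) ncopies_nemb mul1n. Qed.

Lemma free_small J G : (gn G < gn J)%N -> free J G.
Proof.
move=> lt; apply/freeP => f; apply/negP => /embsP[f_inj _].
by have := leq_card f f_inj; rewrite !card_ord leqNgt lt.
Qed.

Lemma split_lshift m n (a : 'I_m) : fintype.split (lshift n a) = inl a.
Proof. exact: (unsplitK (inl a)). Qed.

Lemma split_rshift m n (b : 'I_n) : fintype.split (rshift m b) = inr b.
Proof. exact: (unsplitK (inr b)). Qed.

Lemma lshift_or_rshift m n (x : 'I_(m + n)) :
  (exists i, x = lshift n i) \/ (exists k, x = rshift m k).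
Proof.
by rewrite -(splitK x); case: (fintype.split x) => [i|k]; [left; exists i | right; exists k].
Qed.

Lemma dominating_adj J (v0 v : 'I_(gn J)) : dominating J v0 -> v != v0 -> gadj v0 v.
Proof. by move=> v0_dom v_v0; move/forallP/(_ v)/implyP: v0_dom; apply. Qed.

(** * Disjoint unions *)

Section DisjointUnion.
Variables A B : graph.

Lemma gunion_adj_ll a a' : @gadj (gunion A B) (lshift (gn B) a) (lshift (gn B) a') = gadj a a'.
Proof. by rewrite /= /gunion_adj !split_lshift. Qed.

Lemma gunion_adj_rr b b' : @gadj (gunion A B) (rshift (gn A) b) (rshift (gn A) b') = gadj b b'.
Proof. by rewrite /= /gunion_adj !split_rshift. Qed.

Lemma gunion_adj_lr a b : @gadj (gunion A B) (lshift (gn B) a) (rshift (gn A) b) = false.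
Proof. by rewrite /= /gunion_adj split_lshift split_rshift. Qed.

Lemma gunion_adj_rl a b : @gadj (gunion A B) (rshift (gn A) b) (lshift (gn B) a) = false.
Proof. by rewrite gadj_sym gunion_adj_lr. Qed.

Variables (J : graph) (v0 : 'I_(gn J)).
Hypothesis v0_dom : dominating J v0.

(* A dominating vertex makes every embedding land on one side of the union. *)
Lemma emb_gunion_l f a0 : f \in embs J (gunion A B) -> f v0 = lshift (gn B) a0 ->
  f \in postcomp (lshift (gn B)) @: embs J A.
Proof.
move=> /embsP[f_inj f_adj] f_v0.
have side v : exists a, f v = lshift (gn B) a.
  case: (eqVneq v v0) => [->|v_v0]; first by exists a0.
  have := f_adj _ _ (dominating_adj v0_dom v_v0); rewrite f_v0.
  by case: (lshift_or_rshift (f v)) => [[a ->]|[b ->]]; [exists a | rewrite gunion_adj_lr].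
have [g g_f] := fin_all_exists side.
apply/imsetP; exists [ffun v => g v]; last by apply/ffunP => v; rewrite !ffunE.
apply/embsP; split=> x y; rewrite !ffunE.
  by move=> E; apply: f_inj; rewrite !g_f E.
by move/f_adj; rewrite !g_f gunion_adj_ll.
Qed.

Lemma emb_gunion_r f b0 : f \in embs J (gunion A B) -> f v0 = rshift (gn A) b0 ->
  f \in postcomp (@rshift (gn A) (gn B)) @: embs J B.
Proof.
move=> /embsP[f_inj f_adj] f_v0.
have side v : exists b, f v = rshift (gn A) b.
  case: (eqVneq v v0) => [->|v_v0]; first by exists b0.
  have := f_adj _ _ (dominating_adj v0_dom v_v0); rewrite f_v0.
  by case: (lshift_or_rshift (f v)) => [[a ->]|[b ->]]; [rewrite gunion_adj_rl | exists b].
have [g g_f] := fin_all_exists side.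
apply/imsetP; exists [ffun v => g v]; last by apply/ffunP => v; rewrite !ffunE.
apply/embsP; split=> x y; rewrite !ffunE.
  by move=> E; apply: f_inj; rewrite !g_f E.
by move/f_adj; rewrite !g_f gunion_adj_rr.
Qed.

Lemma nemb_gunion : nemb J (gunion A B) = (nemb J A + nemb J B)%N.
Proof.
have l_inj := postcomp_inj (A := 'I_(gn J)) (@lshift_inj (gn A) (gn B)).
have r_inj := postcomp_inj (A := 'I_(gn J)) (@rshift_inj (gn A) (gn B)).
rewrite /nemb; have -> : embs J (gunion A B) =
    postcomp (lshift (gn B)) @: embs J A :|: postcomp (@rshift (gn A) (gn B)) @: embs J B.
  apply/setP => f; rewrite finset.in_setU; apply/idP/orP => [f_emb|].
    by case: (lshift_or_rshift (f v0)) => [[a]|[b]] f_v0;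
      [left; apply: emb_gunion_l f_v0 | right; apply: emb_gunion_r f_v0].
  case=> /imsetP[g g_emb ->]; apply: postcomp_emb g_emb.
  - exact: lshift_inj.
  - by move=> x y; rewrite gunion_adj_ll.
  - exact: rshift_inj.
  - by move=> x y; rewrite gunion_adj_rr.
rewrite cardsU !card_imset //.
suff -> : postcomp (lshift (gn B)) @: embs J A :&: postcomp (@rshift (gn A) (gn B)) @: embs J B
    = set0 by rewrite cards0 subn0.
apply/setP => f; rewrite !inE; apply/negbTE/negP.
case/andP=> /imsetP[g _ ->] /imsetP[h _ /ffunP/(_ v0)].
by rewrite !ffunE => /eqP; rewrite eq_lrshift.
Qed.

Lemma ncopies_gunion : Ncopies J (gunion A B) = (Ncopies J A + Ncopies J B)%N.
Proof.
apply/eqP; rewrite -(eqn_pmul2r (nemb_self_gt0 J)) mulnDl !ncopies_nemb.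
by rewrite nemb_gunion.
Qed.

End DisjointUnion.

Lemma ncopies_copies J L (v0 : 'I_(gn J)) : dominating J v0 ->
  forall q, Ncopies J (copies q L) = (q * Ncopies J L)%N.
Proof.
move=> v0_dom; elim=> [|q IHq] /=.
  by apply: free_small; apply: leq_ltn_trans (leq0n v0) (ltn_ord v0).
by rewrite (ncopies_gunion _ _ v0_dom) IHq mulSn addnC.
Qed.

Lemma free_gunion F A B (v0 : 'I_(gn F)) : dominating F v0 ->
  free F A -> free F B -> free F (gunion A B).
Proof. by move=> v0_dom A_free B_free; rewrite /free (ncopies_gunion _ _ v0_dom) A_free B_free. Qed.

Lemma free_copies F L (v0 : 'I_(gn F)) : dominating F v0 ->
  free F L -> forall q, free F (copies q L).
Proof. by move=> v0_dom L_free q; rewrite /free (ncopies_copies _ v0_dom) L_free muln0. Qed.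

Lemma dominating_K n (v : 'I_n) : dominating (K n) v.
Proof. by apply/forallP => w; apply/implyP; rewrite eq_sym. Qed.

Lemma dominating_KI u m (v : 'I_(u + m)) : (v < u)%N -> dominating (KI u m) v.
Proof. by move=> v_u; apply/forallP => w; apply/implyP; rewrite /= eq_sym v_u => ->. Qed.

Lemma exists_dominating H : (0 < dom H)%N -> exists v, dominating H v.
Proof. by rewrite /dom card_gt0 => /set0Pn[v]; rewrite inE; exists v. Qed.

(** * Splitting off the dominating vertices *)

Lemma widen_ord_inj n m (n_m : (n <= m)%N) : injective (widen_ord n_m).
Proof. by move=> a b /(congr1 val) /= E; apply: val_inj. Qed.
Arguments widen_ord_inj {n m}.

Lemma card_lt_ord (N m : nat) : (m <= N)%N -> #|[set k : 'I_N | (k < m)%N]| = m.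
Proof.
move=> m_N; rewrite -[RHS]card_ord -(card_imset _ (widen_ord_inj m_N)).
apply: eq_card => k; rewrite inE; apply/idP/imsetP => [k_m|[j _ ->]]; last by rewrite /= ltn_ord.
by exists (Ordinal k_m) => //; apply: val_inj.
Qed.

Section Rank.
Variables (n : nat) (P : pred 'I_n).

Definition rank (v : 'I_n) : nat := #|[set w | P w & (val w < val v)%N]|.

Lemma rank_lt v w : P v -> (val v < val w)%N -> (rank v < rank w)%N.
Proof.
move=> Pv vw; apply: proper_card; rewrite properE; apply/andP; split.
  by apply/subsetP => x; rewrite !inE => /andP[-> /ltn_trans]; apply.
by apply/subsetPn; exists v; rewrite !inE ?Pv ?vw ?ltnn ?andbF.
Qed.

Lemma rank_inj : {in [set v | P v] &, injective rank}.
Proof.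
move=> v w; rewrite !inE => Pv Pw E; apply: val_inj.
by case: (ltngtP (val v) (val w)) => // [/(rank_lt Pv)|/(rank_lt Pw)]; rewrite E ltnn.
Qed.

Lemma rank_lt_card v : P v -> (rank v < #|[set w | P w]|)%N.
Proof.
move=> Pv; apply: proper_card; rewrite properE; apply/andP; split.
  by apply/subsetP => w; rewrite !inE => /andP[].
by apply/subsetPn; exists v; rewrite !inE ?Pv ?ltnn ?andbF.
Qed.

(* Ranks of the [P]-vertices enumerate [0, #|P|), so exactly [u] of them are below [u]. *)
Lemma card_rank_lt u : (u <= #|[set v | P v]|)%N -> #|[set v | P v && (rank v < u)%N]| = u.
Proof.
set D := [set v | P v] => u_D.
have D_n : (#|D| <= n.+1)%N by rewrite ltnW // ltnS -[X in (_ <= X)%N]card_ord max_card.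
have rank_n v : (rank v < n.+1)%N by rewrite ltnS -[X in (_ <= X)%N]card_ord max_card.
pose r v : 'I_n.+1 := Ordinal (rank_n v).
have r_inj : {in D &, injective r} by move=> v w Dv Dw /(congr1 val); apply: rank_inj.
have r_D : r @: D = [set k : 'I_n.+1 | (k < #|D|)%N].
  apply/eqP; rewrite eqEcard card_in_imset // card_lt_ord // leqnn andbT.
  apply/subsetP => _ /imsetP[v Dv ->]; rewrite inE; apply: rank_lt_card.
  by rewrite inE in Dv.
rewrite -(card_in_imset (f := r)); last first.
  by move=> v w; rewrite !inE => /andP[Pv _] /andP[Pw _]; apply: r_inj; rewrite inE.
rewrite -[RHS](@card_lt_ord n.+1 u (leq_trans u_D D_n)).
apply: eq_card => k; apply/imsetP/idP => [[v]|]; first by rewrite !inE => /andP[_ v_u] ->.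
rewrite inE => k_u; have : k \in r @: D by rewrite r_D inE (leq_trans k_u u_D).
case/imsetP => v; rewrite inE => Pv k_v; exists v; rewrite // inE Pv.
by rewrite k_v in k_u.
Qed.

End Rank.

Definition cnbhd G u (g : {ffun 'I_u -> 'I_(gn G)}) : {set 'I_(gn G)} :=
  [set v | [forall i, gadj (g i) v]].

Lemma cnbhdP G u (g : {ffun 'I_u -> 'I_(gn G)}) v :
  reflect (forall i, gadj (g i) v) (v \in cnbhd g).
Proof. by rewrite inE; apply: forallP. Qed.

Lemma induced_adj G (S : {set 'I_(gn G)}) (a b : 'I_(gn (induced S))) :
  gadj a b = gadj (enum_val a) (enum_val b).
Proof. by []. Qed.

Lemma emb_induced J G (S : {set 'I_(gn G)}) f : f \in embs J (induced S) ->
  postcomp enum_val f \in embs J G /\ forall k, postcomp enum_val f k \in S.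
Proof.
move=> f_emb; split; last by move=> k; rewrite ffunE; apply: enum_valP.
by apply: postcomp_emb f_emb => [x y /enum_val_inj|x y]; rewrite ?induced_adj.
Qed.

Lemma card_embs_into J G (S : {set 'I_(gn G)}) :
  #|[set h in embs J G | [forall k, h k \in S]]| = nemb J (induced S).
Proof.
have val_inj : injective (@enum_val _ (mem S)) by move=> a b /enum_val_inj.
rewrite /nemb -(card_imset _ (postcomp_inj (A := 'I_(gn J)) val_inj)).
apply: eq_card => h; apply/idP/imsetP => [|[f /emb_induced[f_emb f_S] ->]]; last first.
  by rewrite inE f_emb; apply/forallP.
rewrite inE => /andP[/embsP[h_inj h_adj] /forallP h_S].
have h_val k : h k = enum_val (enum_rank_in (h_S k) (h k)) by rewrite enum_rankK_in.
exists [ffun k => enum_rank_in (h_S k) (h k)].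
  apply/embsP; split=> x y; rewrite !ffunE.
    by move/(congr1 enum_val); rewrite -!h_val => /h_inj.
  by move/h_adj; rewrite induced_adj -!h_val.
by apply/ffunP => k; rewrite !ffunE -h_val.
Qed.

(* The [u] dominating vertices deleted by [Hdown H u]. *)
Definition domset H u : {set 'I_(gn H)} :=
  [set v | dominating H v && (rank (dominating H) v < u)%N].

Section Decomposition.
Variables (H : graph) (u : nat).
Hypotheses (u_gt0 : (0 < u)%N) (u_dom : (u <= dom H)%N).

Lemma card_domset : #|domset H u| = u.
Proof. exact: card_rank_lt. Qed.

Let eX (i : 'I_u) : 'I_(gn H) := enum_val (cast_ord (esym card_domset) i).
Let eY (k : 'I_(gn (Hdown H u))) : 'I_(gn H) := @enum_val _ (mem (~: domset H u)) k.

Lemma eX_inj : injective eX.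
Proof. by move=> i j /enum_val_inj /cast_ord_inj. Qed.

Lemma eY_inj : injective eY.
Proof. by move=> i j /enum_val_inj. Qed.

Lemma eX_dom i : dominating H (eX i).
Proof. by have := enum_valP (cast_ord (esym card_domset) i); rewrite inE => /andP[]. Qed.

Lemma eX_neq_eY i k : eX i != eY k.
Proof.
apply/eqP => E; have := enum_valP k; rewrite inE -[enum_val k]/(eY k) -E.
by rewrite [eX i \in _]enum_valP.
Qed.

Lemma eX_or_eY v : (exists i, v = eX i) \/ (exists k, v = eY k).
Proof.
case: (boolP (v \in domset H u)) => [v_X|v_Y].
  by left; exists (cast_ord card_domset (enum_rank_in v_X v)); rewrite /eX cast_ordK enum_rankK_in.
have v_Y' : v \in ~: domset H u by rewrite inE.
by right; exists (enum_rank_in v_Y' v); rewrite /eY enum_rankK_in.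
Qed.

Lemma eX_adj_eY i k : gadj (eX i) (eY k).
Proof.
by apply: dominating_adj (eX_dom i) _; rewrite eq_sym eX_neq_eY.
Qed.

Definition res_dom G (f : {ffun 'I_(gn H) -> 'I_(gn G)}) : {ffun 'I_(gn (K u)) -> 'I_(gn G)} :=
  [ffun i => f (eX i)].
Definition res_down G (f : {ffun 'I_(gn H) -> 'I_(gn G)}) :
  {ffun 'I_(gn (Hdown H u)) -> 'I_(gn G)} := [ffun k => f (eY k)].

Lemma res_dom_emb G f : f \in embs H G -> res_dom f \in embs (K u) G.
Proof.
move=> /embsP[f_inj f_adj]; apply/embsP; split=> i j; rewrite !ffunE.
  by move/f_inj/eX_inj.
move=> ij; apply: f_adj; apply: dominating_adj (eX_dom i) _.
by rewrite (inj_eq eX_inj) eq_sym.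
Qed.

Lemma res_down_emb G f : f \in embs H G -> res_down f \in embs (Hdown H u) G.
Proof.
move=> /embsP[f_inj f_adj]; apply/embsP.
by split=> k l; rewrite !ffunE; [move/f_inj/eY_inj | move/f_adj].
Qed.

Lemma res_down_cnbhd G f k : f \in embs H G -> res_down f k \in cnbhd (res_dom f).
Proof.
by move=> /embsP[_ f_adj]; apply/cnbhdP => i; rewrite !ffunE; apply/f_adj/eX_adj_eY.
Qed.

Lemma glue_emb G g h : g \in embs (K u) G -> h \in embs (Hdown H u) G ->
  (forall k, h k \in cnbhd g) -> exists2 f, f \in embs H G & res_dom f = g /\ res_down f = h.
Proof.
move=> /embsP[g_inj g_adj] /embsP[h_inj h_adj] h_N.
have gh_adj k i : gadj (g i) (h k) by move/cnbhdP: (h_N k); apply.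
pose f := [ffun v => if [pick i | eX i == v] is Some i then g i
                     else if [pick k | eY k == v] is Some k then h k else g (Ordinal u_gt0)].
have fX i : f (eX i) = g i.
  by rewrite ffunE; case: pickP => [i' /eqP/eX_inj -> // | /(_ i)]; rewrite eqxx.
have fY k : f (eY k) = h k.
  rewrite ffunE; case: pickP => [i /eqP E | _]; first by have := eX_neq_eY i k; rewrite E eqxx.
  by case: pickP => [k' /eqP/eY_inj -> // | /(_ k)]; rewrite eqxx.
exists f; last by split; apply/ffunP => x; rewrite ffunE ?fX ?fY.
apply/embsP; split=> v w; case: (eX_or_eY v) => [[i ->]|[k ->]];
  case: (eX_or_eY w) => [[j ->]|[l ->]]; rewrite ?fX ?fY.
- by move/g_inj ->.
- by move=> E; have := gh_adj l i; rewrite E gadj_irr.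
- by move=> E; have := gh_adj k j; rewrite E gadj_irr.
- by move/h_inj ->.
- by move=> ij; apply: g_adj; apply: contraTneq ij => ->; rewrite gadj_irr.
- by move=> _; apply: gh_adj.
- by move=> _; rewrite gadj_sym; apply: gh_adj.
- by move=> kl; apply: h_adj.
Qed.

Lemma card_res_fiber G g : g \in embs (K u) G ->
  #|[set f in embs H G | res_dom f == g]| = nemb (Hdown H u) (induced (cnbhd g)).
Proof.
move=> g_emb; rewrite -card_embs_into -(@card_in_imset _ _ (@res_down G)); last first.
  move=> f1 f2; rewrite !inE => /andP[_ /eqP/ffunP E1] /andP[_ /eqP/ffunP E2] /ffunP E.
  apply/ffunP => v; case: (eX_or_eY v) => [[i ->]|[k ->]].
    by move: (E1 i) (E2 i); rewrite !ffunE => -> ->.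
  by move: (E k); rewrite !ffunE.
apply: eq_card => h; apply/imsetP/idP => [[f]|].
  rewrite inE => /andP[f_emb /eqP <-] ->; rewrite inE; apply/andP; split.
    exact: res_down_emb.
  by apply/forallP => k; apply: res_down_cnbhd.
rewrite inE => /andP[h_emb /forallP h_N].
have [f f_emb [f_g f_h]] := glue_emb g_emb h_emb h_N.
by exists f; rewrite // inE f_emb f_g eqxx.
Qed.

Lemma nemb_decomp G :
  nemb H G = \sum_(g in embs (K u) G) nemb (Hdown H u) (induced (cnbhd g)).
Proof.
rewrite [LHS]/nemb -sum1_card (partition_big (@res_dom G) (mem (embs (K u) G))) /=.
  apply: eq_bigr => g g_emb; rewrite -card_res_fiber // -sum1_card.
  by apply: eq_bigl => f; rewrite inE.
exact: res_dom_emb.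
Qed.

End Decomposition.

(** * Common neighbourhoods *)

Lemma join_emb G u m (g : {ffun 'I_u -> 'I_(gn G)}) (h : 'I_m -> 'I_(gn G)) :
  g \in embs (K u) G -> injective h -> (forall k, h k \in cnbhd g) ->
  exists c : {ffun 'I_(u + m) -> 'I_(gn G)}, [/\ injective c,
    forall i, c (lshift m i) = g i & forall k, c (rshift u k) = h k].
Proof.
move=> /embsP[g_inj _] h_inj h_N.
have gh_adj k i : gadj (g i) (h k) by move/cnbhdP: (h_N k); apply.
exists [ffun x => match fintype.split x with inl i => g i | inr k => h k end].
split=> [x y|i|k]; rewrite ?ffunE ?split_lshift ?split_rshift //.
case: (lshift_or_rshift x) => [[i ->]|[k ->]]; case: (lshift_or_rshift y) => [[j ->]|[l ->]];
  rewrite ?split_lshift ?split_rshift.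
- by move/g_inj ->.
- by move=> E; have := gh_adj l i; rewrite E gadj_irr.
- by move=> E; have := gh_adj k j; rewrite E gadj_irr.
- by move/h_inj ->.
Qed.

Lemma KI_adj u m (x y : 'I_(gn (KI u m))) :
  gadj x y = (x != y) && ((val x < u)%N || (val y < u)%N).
Proof. by []. Qed.

Lemma lshift_lt m n (i : 'I_m) : (val (lshift n i) < m)%N.
Proof. by rewrite /= ltn_ord. Qed.

Lemma rshift_ltF m n (k : 'I_n) : (val (rshift m k) < m)%N = false.
Proof. by rewrite /= ltnNge leq_addr. Qed.

Lemma free_KIP G u Delta : free (KI u Delta.+1) G <->
  (forall g, g \in embs (K u) G -> (#|cnbhd g| <= Delta)%N).
Proof.
split=> [KI_free g g_emb|small].
  rewrite leqNgt; apply/negP => big; have /embsP[g_inj g_adj] := g_emb.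
  pose e (k : 'I_Delta.+1) := @enum_val _ (mem (cnbhd g)) (widen_ord big k).
  have e_inj : injective e by move=> a b /enum_val_inj/widen_ord_inj.
  have e_N k : e k \in cnbhd g by apply: enum_valP.
  have [c [c_inj c_l c_r]] := join_emb g_emb e_inj e_N.
  move/freeP/(_ c)/negP: KI_free; apply; apply/embsP; split=> // x y; rewrite KI_adj.
  case: (lshift_or_rshift x) => [[i ->]|[k ->]]; case: (lshift_or_rshift y) => [[j ->]|[l ->]];
    rewrite ?c_l ?c_r ?lshift_lt ?rshift_ltF ?andbT ?andbF //.
  - by rewrite (inj_eq (@lshift_inj _ _)); apply: g_adj.
  - by move=> _; move/cnbhdP: (e_N l); apply.
  - by move=> _; rewrite gadj_sym; move/cnbhdP: (e_N k); apply.
apply/freeP => f; apply/negP => /embsP[f_inj f_adj].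
pose g : {ffun 'I_(gn (K u)) -> 'I_(gn G)} := [ffun i => f (lshift Delta.+1 i)].
have g_emb : g \in embs (K u) G.
  apply/embsP; split=> i j; rewrite !ffunE; first by move/f_inj/lshift_inj.
  by move=> ij; apply: f_adj; rewrite KI_adj (inj_eq (@lshift_inj _ _)) lshift_lt andbT.
pose e (k : 'I_Delta.+1) := f (rshift u k).
have e_inj : injective e by move=> a b /f_inj/rshift_inj.
have e_N : e @: [set: 'I_Delta.+1] \subset cnbhd g.
  apply/subsetP => _ /imsetP[k _ ->]; apply/cnbhdP => i; rewrite ffunE; apply: f_adj.
  by rewrite KI_adj eq_lrshift lshift_lt.
have := leq_trans (subset_leq_card e_N) (small g g_emb).
by rewrite card_imset // cardsT card_ord ltnn.
Qed.

Lemma free_K_cnbhd G u r g : g \in embs (K u) G -> free (K (u + r)) G ->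
  free (K r) (induced (cnbhd g)).
Proof.
move=> g_emb K_free; apply/freeP => f; apply/negP => /emb_induced[/embsP[h_inj h_adj] h_N].
have /embsP[g_inj g_adj] := g_emb.
have [c [c_inj c_l c_r]] := join_emb g_emb h_inj h_N.
move/freeP/(_ c)/negP: K_free; apply; apply/embsP; split=> // x y /= xy.
case: (lshift_or_rshift x) xy => [[i ->]|[k ->]]; case: (lshift_or_rshift y) => [[j ->]|[l ->]];
  rewrite ?c_l ?c_r.
- by rewrite (inj_eq (@lshift_inj _ _)); apply: g_adj.
- by move=> _; move/cnbhdP: (h_N l); apply.
- by move=> _; rewrite gadj_sym; move/cnbhdP: (h_N k); apply.
- by rewrite (inj_eq (@rshift_inj _ _)); apply: h_adj.
Qed.

Lemma T_adj r n (v w : 'I_(gn (T r n))) : gadj v w = (v %% r != w %% r)%N.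
Proof. by []. Qed.

Lemma nemb_T_le J r n m : (n <= m)%N -> (nemb J (T r n) <= nemb J (T r m))%N.
Proof. by move=> n_m; apply: (@nemb_le J (T r n) (T r m) _ (widen_ord_inj n_m)). Qed.

Section TuranGraph.
Variables (omega n : nat).
Hypothesis omega_gt0 : (0 < omega)%N.

Definition part (v : 'I_(gn (T omega n))) : 'I_omega := Ordinal (ltn_pmod v omega_gt0).

Lemma clique_part_inj k g : g \in embs (K k) (T omega n) -> injective (fun i => part (g i)).
Proof.
move=> /embsP[_ g_adj] i j /(congr1 val) /= E; apply/eqP; apply: contraT => ij.
by have := g_adj i j ij; rewrite T_adj E eqxx.
Qed.

Lemma free_K_T : free (K omega.+1) (T omega n).
Proof.
apply/freeP => f; apply/negP => /clique_part_inj/leq_card.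
by rewrite !card_ord ltnn.
Qed.

Variables (u : nat) (g : {ffun 'I_(gn (K u)) -> 'I_(gn (T omega n))}).

Definition parts_met : {set 'I_omega} := [set part (g i) | i : 'I_u].

Lemma card_parts_free : g \in embs (K u) (T omega n) -> #|~: parts_met| = (omega - u)%N.
Proof.
move=> g_emb; have := cardsC parts_met.
rewrite card_imset ?card_ord; last exact: clique_part_inj g_emb.
by move=> E; rewrite -[in RHS]E addKn.
Qed.

Lemma cnbhd_T v : (v \in cnbhd g) = (part v \notin parts_met).
Proof.
apply/cnbhdP/idP => [v_N|v_free i].
  by apply/imsetP => -[i _ /(congr1 val) /= E]; have := v_N i; rewrite T_adj E eqxx.
rewrite T_adj; apply: contraNneq v_free => E; apply/imsetP; exists i => //.
by apply: val_inj; rewrite /= E.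
Qed.

End TuranGraph.

Section UpperBound.
Variables (H : graph) (u Delta omega w0 : nat).
Hypotheses (u_gt0 : (0 < u)%N) (u_dom : (u <= dom H)%N).
Hypotheses (w0_omega0 : is_omega0 (Hdown H u) w0) (w0_le : (w0 + u <= omega)%N).

(* A common neighbourhood has at most [Delta] vertices and is [K_(omega-u+1)]-free, so the
   defining property of [w0] applies to it. *)
Lemma nemb_cnbhd_le G g : g \in embs (K u) G ->
  free (KI u Delta.+1) G -> free (K omega.+1) G ->
  (nemb (Hdown H u) (induced (cnbhd g)) <= nemb (Hdown H u) (T (omega - u) Delta))%N.
Proof.
move=> g_emb KI_free K_free.
have N_le := (free_KIP G u Delta).1 KI_free g g_emb.
have N_free : free (K (omega - u).+1) (induced (cnbhd g)).
  by apply: free_K_cnbhd g_emb _; have -> : (u + (omega - u).+1 = omega.+1)%N by lia.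
(* [turan_prop] only speaks about graphs with at least one vertex. *)
case: (posnP #|cnbhd g|) => [N0|N_gt0].
  apply: (@nemb_le _ (induced (cnbhd g)) (T _ Delta) _ (widen_ord_inj N_le)) => -[x x_lt] y.
  by exfalso; move: x_lt; rewrite /= N0.
apply: leq_trans (nemb_T_le _ _ N_le).
case: w0_omega0 => w0_gt0 turan _.
have := turan (omega - u) (ltac:(lia)) (induced (cnbhd g)) N_gt0 N_free.
by rewrite -(leq_pmul2r (nemb_self_gt0 (Hdown H u))) !ncopies_nemb.
Qed.

Lemma nemb_upper G : free (KI u Delta.+1) G -> free (K omega.+1) G ->
  (nemb H G <= nemb (K u) G * nemb (Hdown H u) (T (omega - u) Delta))%N.
Proof.
move=> KI_free K_free; rewrite (nemb_decomp u_gt0 u_dom) [nemb (K u) G]/nemb -sum_nat_const.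
by apply: leq_sum => g g_emb; apply: nemb_cnbhd_le.
Qed.

End UpperBound.

Section TuranHost.
Variables (u Delta omega : nat).
Hypotheses (r_gt0 : (0 < omega - u)%N) (r_dvd : (omega - u %| Delta)%N).
Let r := (omega - u)%N.
Let m := (Delta %/ r)%N.
Let L := T omega (omega * m).

Let omega_gt0 : (0 < omega)%N.
Proof. by move: r_gt0; rewrite /r; lia. Qed.

(* Vertex [k] of [T r Delta] goes to block [k %/ r] of [L], into the [(k %% r)]-th part
   missed by [g]. *)
Lemma T_sub_cnbhd g : g \in embs (K u) L ->
  exists phi : 'I_Delta -> 'I_(gn L), [/\ injective phi,
    forall x y, @gadj (T r Delta) x y -> gadj (phi x) (phi y) & forall k, phi k \in cnbhd g].
Proof.
move=> g_emb; have Q_r := card_parts_free omega_gt0 g_emb.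
pose q (k : 'I_Delta) : 'I_omega := enum_val (cast_ord (esym Q_r) (Ordinal (ltn_pmod k r_gt0))).
have q_free k : q k \in ~: parts_met omega_gt0 g by apply: enum_valP.
have q_eq k k' : q k = q k' -> (k %% r = k' %% r)%N.
  by move/enum_val_inj/cast_ord_inj/(congr1 val).
have phi_lt (k : 'I_Delta) : (k %/ r * omega + q k < omega * m)%N.
  have : (k %/ r < m)%N by rewrite ltn_divLR // /m divnK.
  by have := ltn_ord (q k); nia.
pose phi k : 'I_(gn L) := Ordinal (phi_lt k).
have phi_mod k : (phi k %% omega = q k)%N by rewrite /= modnMDl modn_small.
have phi_div k : (phi k %/ omega = k %/ r)%N.
  by rewrite /= divnMDl // (divn_small (ltn_ord (q k))) addn0.
exists phi; split.
- move=> k k' E; have q_kk' : q k = q k' by apply: val_inj; rewrite /= -!phi_mod E.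
  apply: val_inj; rewrite /= (divn_eq k r) (divn_eq k' r) -!phi_div E.
  by rewrite (q_eq _ _ q_kk').
- by move=> x y; rewrite !T_adj !phi_mod; apply: contra => /eqP/val_inj/q_eq ->.
- move=> k; rewrite cnbhd_T -finset.in_setC.
  suff -> : part omega_gt0 (phi k) = q k by [].
  by apply: val_inj; rewrite /= phi_mod.
Qed.

Lemma card_cnbhd_L g : g \in embs (K u) L -> (#|cnbhd g| <= Delta)%N.
Proof.
move=> g_emb; have Q_r := card_parts_free omega_gt0 g_emb.
have blk_lt (v : 'I_(gn L)) : (v %/ omega < m)%N by rewrite ltn_divLR // mulnC.
pose psi (v : 'I_(gn L)) := (Ordinal (blk_lt v), part omega_gt0 v).
have psi_inj : injective psi.
  move=> v w E; have /= E1 := congr1 (fun p => val p.1) E.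
  have /= E2 := congr1 (fun p => val p.2) E.
  by apply: val_inj; rewrite /= (divn_eq v omega) (divn_eq w omega) E1 E2.
rewrite -(card_imset _ psi_inj).
apply: (@leq_trans #|finset.setX [set: 'I_m] (~: parts_met omega_gt0 g)|).
  apply: subset_leq_card; apply/subsetP => _ /imsetP[v v_N ->].
  by rewrite in_setX finset.in_setT /= finset.in_setC -cnbhd_T.
by rewrite cardsX cardsT card_ord Q_r /m /r divnK.
Qed.

Lemma free_KI_L : free (KI u Delta.+1) L.
Proof. by apply/free_KIP => g; apply: card_cnbhd_L. Qed.

Lemma nemb_lower H : (0 < u)%N -> (u <= dom H)%N ->
  (nemb (K u) L * nemb (Hdown H u) (T r Delta) <= nemb H L)%N.
Proof.
move=> u_gt0 u_dom; rewrite (nemb_decomp u_gt0 u_dom) [nemb (K u) L]/nemb -sum_nat_const.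
apply: leq_sum => g g_emb; have [phi [phi_inj phi_adj phi_N]] := T_sub_cnbhd g_emb.
rewrite -card_embs_into /nemb -(card_imset _ (postcomp_inj (A := 'I_(gn (Hdown H u))) phi_inj)).
apply: subset_leq_card; apply/subsetP => _ /imsetP[f f_emb ->]; rewrite inE.
rewrite (@postcomp_emb _ (T r Delta) L _ _ phi_inj phi_adj f_emb).
by apply/forallP => k; rewrite ffunE.
Qed.

End TuranHost.

(** * The extremal number *)

Local Open Scope classical_set_scope.
Local Open Scope ring_scope.

Section RatioBounds.
Variable R : realType.

Lemma ratio_witness_bound (x N0 NL kL p q : R) : 0 < NL -> 0 < kL -> 1 <= q ->
  q * NL <= N0 -> N0 <= x -> x * kL <= p * NL -> p < (q + 1) * kL -> 0 < p ->
  `|1 - x / N0| <= 2 * kL / p.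
Proof.
move=> NL_gt0 kL_gt0 q_ge1 N0_ge x_ge x_le p_lt p_gt0.
have N0_gt0 : 0 < N0 by nra.
have -> : 1 - x / N0 = - ((x - N0) / N0) by field; lra.
rewrite normrN ger0_norm; last by apply: divr_ge0; lra.
rewrite ler_pdivrMr // mulrAC ler_pdivlMr //.
have gap : x - N0 < NL by nra.
have p_le : NL * p <= NL * ((q + 1) * kL) by nra.
have : NL * ((q + 1) * kL) <= 2 * kL * (q * NL).
  have -> : NL * ((q + 1) * kL) = (NL * kL) * (q + 1) by ring.
  have -> : 2 * kL * (q * NL) = (NL * kL) * (2 * q) by ring.
  by rewrite ler_pM2l ?mulr_gt0 //; lra.
by nra.
Qed.

Lemma ratio_linear_bound (x N0 NL kL p q : R) : 0 < NL -> 0 < kL ->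
  q * NL <= N0 -> N0 <= x -> x * kL <= p * NL -> p < (q + 1) * kL -> 0 < p ->
  `|1 - x / (NL / kL * p)| <= 2 * kL / p.
Proof.
move=> NL_gt0 kL_gt0 N0_ge x_ge x_le p_lt p_gt0.
have -> : 1 - x / (NL / kL * p) = (NL * p - x * kL) / (NL * p).
  by field; rewrite (gt_eqF p_gt0) (gt_eqF NL_gt0) (gt_eqF kL_gt0).
rewrite ger0_norm; last by apply: divr_ge0; nra.
rewrite ler_pdivrMr; last by nra.
rewrite mulrAC ler_pdivlMr //.
have : NL * p - x * kL <= NL * kL by nra.
by nra.
Qed.

Lemma cvg_one_rate (f : nat -> \bar R) (c : R) : 0 < c ->
  (\forall p \near \oo, exists y : R, f p = y%:E /\ `|1 - y| <= c / p%:R) ->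
  f @ \oo --> 1%:E.
Proof.
move=> c_gt0 f_near; apply: cvg_EFin; first by apply: filterS f_near => p [y [-> _]].
apply/cvgrPdist_le => e e_gt0.
apply: filterS2 f_near (nbhs_infty_ger (c / e)) => p [y [f_p y_near]] p_ge.
rewrite /= f_p /=; apply: le_trans y_near _.
have p_gt0 : 0 < (p%:R : R) by apply: lt_le_trans p_ge; apply: divr_gt0.
by rewrite ler_pdivrMr // mulrC -ler_pdivrMr.
Qed.

End RatioBounds.

Lemma ex_u_ge (R : realType) u p H Fs G : kcl u G = p ->
  (forall F, inlist F Fs -> free F G) -> (((Ncopies H G)%:R : R)%:E <= ex_u R u p H Fs)%E.
Proof. by move=> G_p G_Fs; apply: ereal_sup_ubound; exists G. Qed.

Lemma ex_u_le (R : realType) u p H Fs (c : R) :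
  (forall G, kcl u G = p -> (forall F, inlist F Fs -> free F G) -> (Ncopies H G)%:R <= c) ->
  (ex_u R u p H Fs <= c%:E)%E.
Proof. by move=> bound; apply/ereal_supP => _ [G [G_p G_Fs] <-]; rewrite lee_fin bound. Qed.

Section ExtremalNumber.
Variables (R : realType) (H : graph) (u Delta omega w0 : nat).
Hypotheses (u_gt0 : (0 < u)%N) (u_dom : (u <= dom H)%N).
Hypotheses (w0_omega0 : is_omega0 (Hdown H u) w0) (w0_le : (w0 + u <= omega)%N).
Hypotheses (omega_le : (omega <= Delta)%N) (r_dvd : (omega - u %| Delta)%N).

Let L := T omega (omega * (Delta %/ (omega - u))).
Let kL := kcl u L.
Let Fs := [:: KI u Delta.+1; K omega.+1].
Let Fs_free G := forall F, inlist F Fs -> free F G.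
Let ex p := ex_u R u p H Fs.
Let W p := gunion (copies (p %/ kL) L) (copies (p %% kL) (K u)).

Let r_gt0 : (0 < omega - u)%N.
Proof. by case: w0_omega0 => w0_gt0 _ _; lia. Qed.

Lemma kcl_L_gt0 : (0 < kL)%N.
Proof.
have u_omega : (u <= omega)%N by lia.
have m_gt0 : (0 < Delta %/ (omega - u))%N by rewrite divn_gt0 //; lia.
have u_L : (u <= omega * (Delta %/ (omega - u)))%N by nia.
rewrite lt0n; apply/eqP => /freeP/(_ [ffun i => widen_ord u_L i])/negP; apply.
apply/embsP; split=> i j; rewrite !ffunE; first by move/widen_ord_inj.
by move=> ij; rewrite T_adj /= !modn_small ?(leq_trans (ltn_ord _) u_omega).
Qed.

Let Fs_dominating F : inlist F Fs -> exists v, dominating F v.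
Proof.
case=> [->|[->|[]]]; last by exists ord0; apply: dominating_K.
by exists (lshift Delta.+1 (Ordinal u_gt0)); apply: dominating_KI.
Qed.

Lemma Fs_free_L : Fs_free L.
Proof. by move=> F [->|[->|[]]]; [apply: free_KI_L | apply: free_K_T; lia]. Qed.

Lemma Fs_free_copies A q : Fs_free A -> Fs_free (copies q A).
Proof. by move=> A_free F /[dup] /Fs_dominating[v v_dom] /A_free /(free_copies v_dom). Qed.

Lemma Fs_free_W p : Fs_free (W p).
Proof.
have Ku_free : Fs_free (K u) by move=> F [->|[->|[]]]; apply: free_small => /=; lia.
move=> F F_Fs; have [v v_dom] := Fs_dominating F_Fs.
apply: free_gunion v_dom _ _; first exact: Fs_free_copies Fs_free_L _ F_Fs.
exact: Fs_free_copies Ku_free _ F_Fs.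
Qed.

Lemma kcl_W p : kcl u (W p) = p.
Proof.
have v_dom := dominating_K (Ordinal u_gt0).
by rewrite /kcl (ncopies_gunion _ _ v_dom) !(ncopies_copies _ v_dom) ncopies_self muln1 -divn_eq.
Qed.

Lemma ncopies_kcl_le G : Fs_free G -> (Ncopies H G * kL <= kcl u G * Ncopies H L)%N.
Proof.
move=> G_free; have KI_free := G_free _ (or_introl erefl).
have K_free := G_free _ (or_intror (or_introl erefl)).
have up := nemb_upper u_gt0 u_dom w0_omega0 w0_le KI_free K_free.
have low := nemb_lower r_gt0 r_dvd u_gt0 u_dom.
rewrite -[nemb H G]ncopies_nemb -[nemb (K u) G]ncopies_nemb in up.
rewrite -[nemb H L]ncopies_nemb -[nemb (K u) L]ncopies_nemb in low.
move: up low; rewrite /kL /kcl.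
set a := nemb H H; set b := nemb (K u) (K u); set B := nemb (Hdown H u) _.
set NG := Ncopies H G; set NL := Ncopies H L; set kG := Ncopies (K u) G.
set kl := Ncopies (K u) L => up low.
have ab_gt0 : (0 < a * b)%N by rewrite muln_gt0 !nemb_self_gt0.
rewrite -(leq_pmul2r ab_gt0).
have -> : (NG * kl * (a * b) = NG * a * (kl * b))%N by ring.
have -> : (kG * NL * (a * b) = kG * b * (NL * a))%N by ring.
apply: leq_trans (leq_mul up (leqnn (kl * b))) _.
have -> : (kG * b * B * (kl * b) = kG * b * (kl * b * B))%N by ring.
exact: leq_mul (leqnn _) low.
Qed.

Lemma ex_le p : (ex p <= ((p * Ncopies H L)%:R / kL%:R)%:E)%E.
Proof.
apply: ex_u_le => G G_p G_free; rewrite ler_pdivlMr ?ltr0n ?kcl_L_gt0 //.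
by rewrite -natrM ler_nat -G_p; apply: ncopies_kcl_le.
Qed.

Lemma ex_W p : exists x : R,
  [/\ ex p = x%:E, (Ncopies H (W p))%:R <= x & x * kL%:R <= (p * Ncopies H L)%:R].
Proof.
have := ex_u_ge R H (kcl_W p) (Fs_free_W p); have := ex_le p; rewrite /ex.
by case: (ex_u R u p H Fs) => [x | |] //= x_le x_ge; exists x; split=> //;
  move: x_le; rewrite lee_fin ler_pdivlMr ?ltr0n ?kcl_L_gt0.
Qed.

Let W_bounds p : (kL <= p)%N ->
  [/\ 1 <= (p %/ kL)%:R :> R, (p %/ kL)%:R * (Ncopies H L)%:R <= (Ncopies H (W p))%:R :> R,
      p%:R < ((p %/ kL)%:R + 1) * kL%:R :> R & 0 < p%:R :> R].
Proof.
have kL_gt0 := kcl_L_gt0; move=> kL_p; split.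
- by rewrite ler1n divn_gt0.
- have [v v_dom] := exists_dominating (leq_trans u_gt0 u_dom).
  by rewrite -natrM ler_nat (ncopies_gunion _ _ v_dom) (ncopies_copies _ v_dom) leq_addr.
- by rewrite natr1 -natrM ltr_nat ltn_ceil.
- by rewrite ltr0n (leq_trans kL_gt0).
Qed.

Lemma ex_over_W_cvg : (0 < Ncopies H L)%N ->
  (fun p : nat => (ex p * ((Ncopies H (W p))%:R^-1)%:E)%E) @ \oo --> 1%:E.
Proof.
move=> NL_gt0; have kL_gt0 := kcl_L_gt0.
apply: (@cvg_one_rate _ _ (2 * kL%:R)); first by rewrite mulr_gt0 ?ltr0n.
apply: filterS (nbhs_infty_ge kL) => p /W_bounds[q_ge1 N0_ge p_lt p_gt0].
have [x [ex_x x_ge x_le]] := ex_W p.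
exists (x / (Ncopies H (W p))%:R); split; first by rewrite ex_x -EFinM.
by apply: ratio_witness_bound q_ge1 N0_ge x_ge _ p_lt p_gt0; rewrite ?ltr0n // -natrM.
Qed.

Lemma ex_over_linear_cvg : (0 < Ncopies H L)%N ->
  (fun p : nat => (ex p * (((Ncopies H L)%:R / kL%:R * p%:R)^-1)%:E)%E) @ \oo --> 1%:E.
Proof.
move=> NL_gt0; have kL_gt0 := kcl_L_gt0.
apply: (@cvg_one_rate _ _ (2 * kL%:R)); first by rewrite mulr_gt0 ?ltr0n.
apply: filterS (nbhs_infty_ge kL) => p /W_bounds[_ N0_ge p_lt p_gt0].
have [x [ex_x x_ge x_le]] := ex_W p.
exists (x / ((Ncopies H L)%:R / kL%:R * p%:R)); split; first by rewrite ex_x -EFinM.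
by apply: ratio_linear_bound N0_ge x_ge _ p_lt p_gt0; rewrite ?ltr0n // -natrM.
Qed.

Lemma ex_divisible p : (kL %| p)%N -> ex p = ((Ncopies H (copies (p %/ kL) L))%:R)%:E.
Proof.
move=> kL_p; have [v v_dom] := exists_dominating (leq_trans u_gt0 u_dom).
apply/eqP; rewrite eq_le; apply/andP; split.
  apply: le_trans (ex_le p) _; rewrite lee_fin ler_pdivrMr ?ltr0n ?kcl_L_gt0 //.
  by rewrite -natrM ler_nat (ncopies_copies _ v_dom) -{1}(divnK kL_p) mulnAC.
apply: ex_u_ge; last exact: Fs_free_copies Fs_free_L.
by rewrite /kcl (ncopies_copies _ (dominating_K (Ordinal u_gt0))) divnK.
Qed.

End ExtremalNumber.

Theorem mainTheorem11 (R : realType) (u : nat) (H : graph) (Delta omega : nat) :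
  (1 <= u)%N -> (u <= dom H)%N ->
  (exists w0, is_omega0 (Hdown H u) w0 /\ (w0 + u <= omega)%N) ->
  (omega <= Delta)%N -> (omega - u %| Delta)%N ->
  let L := T omega (omega * (Delta %/ (omega - u))) in
  let kL := kcl u L in
  let ex := fun p => ex_u R u p H [:: KI u Delta.+1; K omega.+1] in
  ((0 < Ncopies H L)%N ->
     (fun p : nat => (ex p * (((Ncopies H
          (gunion (copies (p %/ kL) L) (copies (p %% kL) (K u))))%:R : R)^-1)%:E)%E)
       @ \oo --> (1%:E : \bar R))
  /\ ((0 < Ncopies H L)%N ->
     (fun p : nat => (ex p *
          (((Ncopies H L)%:R / kL%:R * p%:R : R)^-1)%:E)%E)
       @ \oo --> (1%:E : \bar R))
  /\ (forall p : nat, (1 <= p)%N -> (kL %| p)%N ->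
        ex p = ((Ncopies H (copies (p %/ kL) L))%:R : R)%:E).
Proof.
move=> u_gt0 u_dom [w0 [w0_omega0 w0_le]] omega_le r_dvd L kL ex.
split; first exact: (ex_over_W_cvg u_gt0 u_dom w0_omega0 w0_le omega_le r_dvd).
split; first exact: (ex_over_linear_cvg u_gt0 u_dom w0_omega0 w0_le omega_le r_dvd).
by move=> p _; apply: (ex_divisible R u_gt0 u_dom w0_omega0 w0_le omega_le r_dvd).
Qed.
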